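(* Let $(A,\succ,\prec)$ be a Leibniz-dendriform algebra with associated Leibniz algebra $(A,\circ)$ and let $r\in A\otimes A$ be skew-symmetric ($\tau(r)=-r$). The following are equivalent: (a) $S(r)=0$; (b) for all $\zeta,\eta\in A^*$: $T_r(\zeta)\circ T_r(\eta)=T_r\big(L_\succ^*(T_r(\zeta))\eta-L_\odot^*(T_r(\eta))\zeta\big)$ (i.e. $T_r$ is an $\mathcal O$-operator on $(A,\circ)$ associated to $(A^*,L_\succ^*,-L_\odot^* )$); (c) for all $\zeta,\eta\in A^*$: $T_r(\zeta)\succ T_r(\eta)=T_r\big(L_\circ^*(T_r(\zeta))\eta+R_\odot^*(T_r(\eta))\zeta\big)$ and $T_r(\zeta)\prec T_r(\eta)=T_r\big(-L_\prec^*(T_r(\zeta))\eta-L_\star^*(T_r(\eta))\zeta\big)$ (i.e. $T_r$ is an $\mathcal O$-operator on $(A,\succ,\prec)$ associated to $(A^*,L_\circ^*,R_\odot^*,-L_\prec^*,-L_\star^* )$).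
   Context: All vector spaces are finite-dimensional over a field $k$; $\langle\cdot,\cdot\rangle$ is the natural pairing, $\tau(a\otimes b)=b\otimes a$. A Leibniz-dendriform algebra is a vector space $A$ with bilinear operations $\succ,\prec$ such that, with $x\circ y:=x\succ y+x\prec y$, for all $x,y,z\in A$: $(x\circ y)\succ z=x\succ(y\succ z)-y\succ(x\succ z)$, $y\prec(x\circ z)+(x\succ y)\prec z=x\succ(y\prec z)$, $x\prec(y\circ z)=(x\prec y)\prec z+y\succ(x\prec z)$. Write $x\odot y:=x\succ y+y\prec x$, $x\star y:=x\circ y+y\circ x$. For a binary operation $*$ let $L_*(x)y=x*y$, $R_*(x)y=y*x$, and $L_\odot:=L_\succ+R_\prec$, $R_\odot:=R_\succ+L_\prec$, $L_\star:=L_\circ+R_\circ$. For $f:A\to\mathrm{End}(A)$, $f^*:A\to\mathrm{End}(A^* )$ is $\langle f^*(x)\xi,v\rangle=-\langle\xi,f(x)v\rangle$. For $r=\sum_i a_i\otimes b_i$, $T_r:A^*\to A$ is $\langle T_r(\zeta),\eta\rangle=\langle r,\zeta\otimes\eta\rangle$, and $S(r):=\sum_{i,j}\big(a_i\otimes a_j\otimes (b_j\circ b_i)-a_i\otimes (b_i\odot a_j)\otimes b_j-(a_i\succ a_j)\otimes b_i\otimes b_j\big)$ (the Leibniz-dendriform Yang–Baxter equation is $S(r)=0$). *)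

From HB Require Import structures.
From mathcomp Require Import all_boot all_order all_algebra.
Set Implicit Arguments. Unset Strict Implicit. Unset Printing Implicit Defensive.
Import GRing.Theory.
Local Open Scope ring_scope.

(* The dual A^dual is 'Hom(A, K^o) (linear functionals); the pairing <xi, v> is xi v.
   A tensor r \in A (x) A is given by a presentation r = \sum_i a_i (x) b_i,
   i.e. a sequence of pairs (a_i, b_i). *)

Section LD.
Variables (K : fieldType) (A : vectType K).

Definition tensor2 := seq (A * A).

Definition pair2 (r : tensor2) (zeta eta : A -> K) : K :=
  \sum_(p <- r) zeta p.1 * eta p.2.

(* tau(r) = - r, tested against all of A^dual (x) A^dual *)
Definition skew_sym (r : tensor2) : Prop :=
  forall zeta eta : 'Hom(A, K^o),
    pair2 r (fun v => zeta v) (fun v => eta v)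
    = - pair2 r (fun v => eta v) (fun v => zeta v).

(* T_r : A^dual -> A,  <T_r(zeta), eta> = <r, zeta (x) eta>, i.e. T_r zeta = \sum_i zeta(a_i) b_i *)
Definition Tr (r : tensor2) (zeta : A -> K) : A := \sum_(p <- r) zeta p.1 *: p.2.

Definition dualop (f : A -> A -> A) (x : A) (xi : A -> K) : A -> K :=
  fun v => - xi (f x v).

Variables (succ prec : A -> A -> A).
Definition circ x y := succ x y + prec x y.
Definition odot x y := succ x y + prec y x.
Definition star x y := circ x y + circ y x.
Definition L_succ x v := succ x v.
Definition L_prec x v := prec x v.
Definition L_circ x v := circ x v.
Definition L_odot x v := succ x v + prec v x.
Definition R_odot x v := succ v x + prec x v.
Definition L_star x v := circ x v + circ v x.

Definition bilinear_op (m : A -> A -> A) : Prop :=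
  (forall x, linear (m x)) /\ (forall y, linear (fun x => m x y)).

Definition LD_axioms : Prop :=
  forall x y z : A,
  [/\ succ (circ x y) z = succ x (succ y z) - succ y (succ x z),
      prec y (circ x z) + prec (succ x y) z = succ x (prec y z)
    & prec x (circ y z) = prec (prec x y) z + succ y (prec x z)].

(* S(r) = 0 in A (x) A (x) A, tested against all zeta (x) eta (x) theta in
   A^dual (x) A^dual (x) A^dual (faithful since A is finite-dimensional). *)
Definition S_pair (r : tensor2) (zeta eta theta : A -> K) : K :=
  \sum_(p <- r) \sum_(q <- r)
    ( zeta p.1 * eta q.1 * theta (circ q.2 p.2)
    - zeta p.1 * eta (odot p.2 q.1) * theta q.2
    - zeta (succ p.1 q.1) * eta p.2 * theta q.2 ).

Definition LD_YBE (r : tensor2) : Prop :=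
  forall zeta eta theta : 'Hom(A, K^o),
    S_pair r (fun v => zeta v) (fun v => eta v) (fun v => theta v) = 0.

Definition O_op_Leibniz (r : tensor2) : Prop :=
  forall zeta eta : 'Hom(A, K^o),
    let z := (fun v => zeta v) in let e := (fun v => eta v) in
    circ (Tr r z) (Tr r e)
    = Tr r (fun v => dualop L_succ (Tr r z) e v - dualop L_odot (Tr r e) z v).

Definition O_op_LD (r : tensor2) : Prop :=
  forall zeta eta : 'Hom(A, K^o),
    let z := (fun v => zeta v) in let e := (fun v => eta v) in
    succ (Tr r z) (Tr r e)
      = Tr r (fun v => dualop L_circ (Tr r z) e v + dualop R_odot (Tr r e) z v)
    /\
    prec (Tr r z) (Tr r e)
      = Tr r (fun v => - dualop L_prec (Tr r z) e v - dualop L_star (Tr r e) z v).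

End LD.

From Pilot Require Import Defs.
From HB Require Import structures.
From mathcomp Require Import all_boot all_order all_algebra.
From mathcomp Require Import ring.
Set Implicit Arguments. Unset Strict Implicit.
Import GRing.Theory.
Local Open Scope ring_scope.

(* Everything rests on one consequence of skew-symmetry: for functionals h
   and a linear f, <h, T_r f> = - f (T_r h).  Expanding the pairing of S(r)
   with e (x) z (x) th and moving all functionals onto T_r in this way gives
   th (T_r z o T_r e - B(z, e)), where B(z, e) is the right-hand side of (b);
   since functionals separate points, (a) <-> (b).  Likewise the succ-part of
   (c) paired with th is (b) for (z, th) paired with e, and the prec-part is
   (b) minus the succ-part. *)

Section LinearFunctions.
Variable K : fieldType.

Lemma linear_fun0 (U V : lmodType K) (f : U -> V) : linear f -> f 0 = 0.
Proof.
move=> lf; have := lf 1 0 0; rewrite !scale1r addr0 => f0.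
by apply: (addrI (f 0)); rewrite addr0 -f0.
Qed.

Lemma linear_fun_sumZ (U V : lmodType K) (f : U -> V) (I : Type) (s : seq I)
    (c : I -> K) (v : I -> U) :
  linear f -> f (\sum_(i <- s) c i *: v i) = \sum_(i <- s) c i *: f (v i).
Proof.
move=> lf; elim: s => [|i s IHs]; first by rewrite !big_nil linear_fun0.
by rewrite !big_cons lf IHs.
Qed.

Lemma linear_funD (U V : lmodType K) (f g : U -> V) :
  linear f -> linear g -> linear (fun v => f v + g v).
Proof. by move=> lf lg a u v; rewrite lf lg scalerDr addrACA. Qed.

Lemma linear_funN (U V : lmodType K) (f : U -> V) :
  linear f -> linear (fun v => - f v).
Proof. by move=> lf a u v; rewrite lf opprD scalerN. Qed.

Variable A : vectType K.

Lemma linear_hom_comp (h : 'Hom(A, K^o)) (g : A -> A) :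
  linear g -> linear (fun v => h (g v) : K^o).
Proof. by move=> lg a u v; rewrite lg linearP. Qed.

Lemma hom_of_linear (f : A -> K^o) :
  linear f -> {h : 'Hom(A, K^o) | forall v, h v = f v}.
Proof.
move=> lf; pose fL : {linear A -> K^o} := HB.pack f (GRing.isLinear.Build K A K^o *:%R f lf).
by exists (linfun fL) => v; rewrite lfunE.
Qed.

Lemma hom_separates (w : A) : (forall h : 'Hom(A, K^o), h w = 0) -> w = 0.
Proof.
move=> hw0; rewrite (coord_vbasis (memvf w)); apply: big1 => i _.
have lcoord : linear (coord (vbasis (fullv : {vspace A})) i : A -> K^o).
  by move=> a u v; rewrite linearP.
have [h hE] := hom_of_linear lcoord.
by have := hw0 h; rewrite hE => ->; rewrite scale0r.
Qed.

Lemma hom_sumZ (h : 'Hom(A, K^o)) (I : Type) (s : seq I) (c : I -> K) (v : I -> A) :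
  h (\sum_(i <- s) c i *: v i) = \sum_(i <- s) c i * h (v i).
Proof. by rewrite (@linear_fun_sumZ _ _ h) // => a x y; rewrite linearP. Qed.

End LinearFunctions.

Section TensorOperator.
Variables (K : fieldType) (A : vectType K) (r : tensor2 A).

Lemma eq_Tr (f g : A -> K) : (forall v, f v = g v) -> Tr r f = Tr r g.
Proof. by move=> fg; apply: eq_bigr => p _; rewrite fg. Qed.

Lemma Tr_add (f g : A -> K) : Tr r (fun v => f v + g v) = Tr r f + Tr r g.
Proof. by rewrite /Tr -big_split; apply: eq_bigr => p _; rewrite scalerDl. Qed.

Lemma Tr_sub (f g : A -> K) : Tr r (fun v => f v - g v) = Tr r f - Tr r g.
Proof. by rewrite /Tr -sumrB; apply: eq_bigr => p _; rewrite scalerBl. Qed.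

Lemma hom_Tr (h : 'Hom(A, K^o)) (f : A -> K) :
  h (Tr r f) = \sum_(p <- r) f p.1 * h p.2.
Proof. exact: hom_sumZ. Qed.

Lemma hom_Tr_skew (h : 'Hom(A, K^o)) (f : A -> K^o) :
  skew_sym r -> linear f -> h (Tr r f) = - f (Tr r (fun v => h v)).
Proof.
move=> skew_r lf; have [g gE] := hom_of_linear lf.
rewrite hom_Tr /Tr (linear_fun_sumZ _ _ _ lf).
have := skew_r g h; rewrite /pair2.
under eq_bigr do rewrite gE.
by under [in X in _ = - X -> _]eq_bigr do rewrite gE; move=> ->.
Qed.

End TensorOperator.

Section LeibnizDendriform.
Variables (K : fieldType) (A : vectType K) (succ prec : A -> A -> A).
Hypotheses (succ_bilinear : bilinear_op succ) (prec_bilinear : bilinear_op prec).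
Variable r : tensor2 A.
Hypothesis skew_r : skew_sym r.

Local Notation circ := (circ succ prec).
Local Notation odot := (odot succ prec).
Local Notation T h := (Tr r (fun v => h v)).

Lemma linear_succl x : linear (succ x). Proof. exact: succ_bilinear.1. Qed.
Lemma linear_succr y : linear (succ^~ y). Proof. exact: succ_bilinear.2. Qed.
Lemma linear_precl x : linear (prec x). Proof. exact: prec_bilinear.1. Qed.
Lemma linear_precr y : linear (prec^~ y). Proof. exact: prec_bilinear.2. Qed.

Lemma linear_circl x : linear (circ x).
Proof. exact: linear_funD (linear_succl x) (linear_precl x). Qed.
Lemma linear_circr y : linear (circ^~ y).
Proof. exact: linear_funD (linear_succr y) (linear_precr y). Qed.
Lemma linear_odotl x : linear (odot x).
Proof. exact: linear_funD (linear_succl x) (linear_precr x). Qed.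
Lemma linear_odotr y : linear (odot^~ y).
Proof. exact: linear_funD (linear_succr y) (linear_precl y). Qed.

Definition Leibniz_rhs (z e : 'Hom(A, K^o)) : A :=
  Tr r (fun v => z (odot (T e) v)) - Tr r (fun v => e (succ (T z) v)).

Definition O_op_Leibniz_eq : Prop :=
  forall z e : 'Hom(A, K^o), circ (T z) (T e) = Leibniz_rhs z e.

Lemma O_op_LeibnizE : O_op_Leibniz succ prec r <-> O_op_Leibniz_eq.
Proof.
have rhsE (z e : 'Hom(A, K^o)) :
    Tr r (fun v => dualop (L_succ succ) (T z) (fun v => e v) v
                   - dualop (L_odot succ prec) (T e) (fun v => z v) v)
    = Leibniz_rhs z e.
  rewrite /Leibniz_rhs -Tr_sub; apply: eq_Tr => v.
  by rewrite /dualop /L_succ /L_odot /Defs.odot opprK addrC.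
by split=> H z e; have := H z e; cbv zeta; rewrite rhsE.
Qed.

Lemma S_pairE (z e th : 'Hom(A, K^o)) :
  S_pair succ prec r (fun v => e v) (fun v => z v) (fun v => th v)
  = th (circ (T z) (T e) - Leibniz_rhs z e).
Proof.
rewrite /Leibniz_rhs !raddfB /=.
have circE : th (circ (T z) (T e)) =
    \sum_(p <- r) \sum_(q <- r) e p.1 * z q.1 * th (circ q.2 p.2).
  rewrite /Tr (linear_fun_sumZ _ _ _ (linear_circr _)) hom_sumZ.
  under eq_bigr do rewrite (linear_fun_sumZ _ _ _ (linear_circl _)) hom_sumZ mulr_sumr.
  rewrite exchange_big /=; apply: eq_bigr => p _; apply: eq_bigr => q _.
  by rewrite mulrCA mulrA.
have odotE : th (Tr r (fun v => z (odot (T e) v))) =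
    \sum_(p <- r) \sum_(q <- r) e p.1 * z (odot p.2 q.1) * th q.2.
  rewrite hom_Tr.
  under eq_bigr do rewrite /Tr (linear_fun_sumZ _ _ _ (linear_odotr _)) hom_sumZ mulr_suml.
  by rewrite exchange_big.
have succE : th (Tr r (fun v => e (succ (T z) v))) =
    - \sum_(p <- r) \sum_(q <- r) e (succ p.1 q.1) * z p.2 * th q.2.
  rewrite hom_Tr exchange_big -sumrN /=; apply: eq_bigr => q _.
  rewrite -mulr_suml -mulNr; congr (_ * _).
  have := hom_Tr_skew z skew_r (linear_hom_comp e (linear_succr q.1)).
  by rewrite hom_Tr => ->; rewrite opprK.
rewrite circE odotE succE opprK addrA /S_pair -!sumrB.
by apply: eq_bigr => p _; rewrite -!sumrB.
Qed.

Lemma LD_YBE_iff_O_op_Leibniz_eq : LD_YBE succ prec r <-> O_op_Leibniz_eq.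
Proof.
split=> [ybe z e | O_r e z th]; last by rewrite S_pairE O_r subrr raddf0.
apply/eqP; rewrite -subr_eq0; apply/eqP; apply: hom_separates => th.
by rewrite -S_pairE; apply: ybe.
Qed.

Lemma O_op_Leibniz_eq_succ : O_op_Leibniz_eq -> forall z e : 'Hom(A, K^o),
  succ (T z) (T e) = Tr r (fun v => dualop (L_circ succ prec) (T z) (fun v => e v) v
                                    + dualop (R_odot succ prec) (T e) (fun v => z v) v).
Proof.
move=> O_r z e; apply/eqP; rewrite -subr_eq0; apply/eqP; apply: hom_separates => th.
have lrhs : linear (fun v => dualop (L_circ succ prec) (T z) (fun v => e v) v
                             + dualop (R_odot succ prec) (T e) (fun v => z v) v : K^o).
  apply: linear_funD; apply: linear_funN; apply: linear_hom_comp.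
    exact: linear_circl.
  exact: linear_funD (linear_succr _) (linear_precl _).
rewrite raddfB /= (hom_Tr_skew _ skew_r lrhs) /dualop /L_circ /R_odot opprK.
have := congr1 e (O_r z th).
rewrite /Leibniz_rhs raddfB /=.
rewrite (hom_Tr_skew _ skew_r (linear_hom_comp z (linear_odotl _))).
rewrite (hom_Tr_skew _ skew_r (linear_hom_comp th (linear_succl _))) opprK => ->.
rewrite /Defs.odot; ring.
Qed.

Lemma O_op_LD_iff_O_op_Leibniz_eq : O_op_LD succ prec r <-> O_op_Leibniz_eq.
Proof.
rewrite /O_op_LD; split=> [O_r z e | O_r z e].
  have := O_r z e; cbv zeta; case=> succE precE.
  rewrite /Defs.circ succE precE /Leibniz_rhs -Tr_add -Tr_sub; apply: eq_Tr => v.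
  rewrite /dualop /L_prec /L_star /L_circ /R_odot /Defs.circ /Defs.odot !raddfD /=; ring.
cbv zeta; split; first exact: O_op_Leibniz_eq_succ.
have -> : prec (T z) (T e) = circ (T z) (T e) - succ (T z) (T e).
  by rewrite /Defs.circ addrAC subrr add0r.
rewrite O_r (O_op_Leibniz_eq_succ O_r) /Leibniz_rhs -!Tr_sub; apply: eq_Tr => v.
rewrite /dualop /L_prec /L_star /L_circ /R_odot /Defs.circ /Defs.odot !raddfD /=; ring.
Qed.

End LeibnizDendriform.

Theorem mainTheorem3 (K : fieldType) (A : vectType K)
  (succ prec : A -> A -> A)
  (hsucc : bilinear_op succ) (hprec : bilinear_op prec)
  (hLD : LD_axioms succ prec)
  (r : tensor2 A) (hskew : skew_sym r) :
  (LD_YBE succ prec r <-> O_op_Leibniz succ prec r) /\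
  (O_op_Leibniz succ prec r <-> O_op_LD succ prec r).
Proof.
rewrite O_op_LeibnizE (LD_YBE_iff_O_op_Leibniz_eq hsucc hprec hskew).
by rewrite (O_op_LD_iff_O_op_Leibniz_eq hsucc hprec hskew).
Qed.
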